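(* Let $\mathcal{X}\subset\mathbb{R}^d$ be a full-dimensional polytope with vertex set $\mathcal{V}$, let ${\bm{u}}\in\mathbb{R}^d$, and let $B,B'\subseteq\mathcal{V}$ be affine bases of $\mathcal{X}$ (sets of $d+1$ affinely independent points) such that $B$ is an optimal spanning set of ${\bm{u}}$. Then ${\bm{v}}(B)\ge{\bm{v}}(B')$ coordinatewise.
   Context: For ${\bm{u}}\in\mathbb{R}^d$ write ${\bm{x}}\succeq{\bm{x}}'$ if $\langle{\bm{u}},{\bm{x}}\rangle\ge\langle{\bm{u}},{\bm{x}}'\rangle$, and $B_{\succeq{\bm{x}}}=\{{\bm{x}}'\in B:\langle{\bm{u}},{\bm{x}}'-{\bm{x}}\rangle\ge0\}$. A finite $B\subseteq\mathcal{X}$ is an optimal spanning set of ${\bm{u}}$ if every vertex ${\bm{x}}\in\mathcal{V}$ lies in the affine hull of $B_{\succeq{\bm{x}}}$. For $B=\{{\bm{x}}_0,\dots,{\bm{x}}_d\}$ with ${\bm{x}}_0\succeq\dots\succeq{\bm{x}}_d$, define ${\bm{v}}(B)=(\langle{\bm{u}},{\bm{x}}_0\rangle,\dots,\langle{\bm{u}},{\bm{x}}_d\rangle)\in\mathbb{R}^{d+1}$. *)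

From mathcomp Require Import all_boot all_order all_algebra.
Set Implicit Arguments. Unset Strict Implicit. Unset Printing Implicit Defensive.
Import Order.TTheory GRing.Theory Num.Theory.
Local Open Scope ring_scope.

Section Defs.
Variables (R : realFieldType) (d : nat).
Notation pt := 'rV[R]_d.

Definition dotp (u x : pt) : R := \sum_(i < d) u ord0 i * x ord0 i.

Definition in_conv (S : seq pt) (x : pt) : Prop :=
  exists l : 'I_(size S) -> R,
    [/\ forall i, 0 <= l i, \sum_i l i = 1 & x = \sum_i l i *: S`_i].

Definition in_aff (S : seq pt) (x : pt) : Prop :=
  exists l : 'I_(size S) -> R, \sum_i l i = 1 /\ x = \sum_i l i *: S`_i.

Definition aff_indep (S : seq pt) : Prop :=
  forall l : 'I_(size S) -> R,
    \sum_i l i = 0 -> \sum_i l i *: S`_i = 0 -> forall i, l i = 0.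

Definition polytope (X : pt -> Prop) : Prop :=
  exists S : seq pt, forall x, X x <-> in_conv S x.

Definition full_dim (X : pt -> Prop) : Prop :=
  exists p : seq pt, [/\ size p = d.+1, aff_indep p & forall y, y \in p -> X y].

Definition is_vertex (X : pt -> Prop) (x : pt) : Prop :=
  X x /\ exists c : pt, forall y, X y -> y <> x -> dotp c y < dotp c x.

Definition affine_basis (X : pt -> Prop) (B : seq pt) : Prop :=
  [/\ size B = d.+1, aff_indep B & forall y, y \in B -> X y].

Definition upper_set (u : pt) (B : seq pt) (x : pt) : seq pt :=
  [seq y <- B | 0 <= dotp u (y - x)].

Definition optimal_spanning (X : pt -> Prop) (u : pt) (B : seq pt) : Prop :=
  (forall y, y \in B -> X y) /\
  forall x, is_vertex X x -> in_aff (upper_set u B x) x.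

Definition vvec (u : pt) (B : seq pt) : seq R :=
  sort (fun a b => b <= a) [seq dotp u x | x <- B].

End Defs.

From mathcomp Require Import all_boot all_order all_algebra.
Set Implicit Arguments. Unset Strict Implicit. Unset Printing Implicit Defensive.
Import Order.TTheory GRing.Theory Num.Theory.

(* Suppose v(B')_i > v(B)_i =: c.  At most i points of B lie strictly above
   the level c, while at least i+1 points of B' do.  Each such point x of B'
   is a vertex, hence lies in the affine hull of B_{>=x}, which only contains
   points of B above c.  So B' lies in the affine hull of the i points of B
   above c together with the at most d-i points of B' below c: at most d
   points, contradicting the affine independence of the d+1 points of B'. *)

Section SortedNonincreasing.
Variables (disp : Order.disp_t) (T : orderType disp) (x0 : T).
Local Open Scope order_scope.
Implicit Types (s : seq T) (c : T).

Lemma sorted_ge_nth s i j :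
  sorted >=%O s -> (i <= j)%N -> (j < size s)%N -> nth x0 s j <= nth x0 s i.
Proof.
move=> ss ij js; apply: (sorted_leq_nth _ _ x0 ss) => //.
- by move=> a b c /= ba cb; exact: le_trans cb ba.
- by move=> a; exact: le_refl.
- exact: leq_ltn_trans ij js.
Qed.

Lemma count_gt_nth_sorted_ge s i :
  sorted >=%O s -> (i < size s)%N -> (count (> nth x0 s i) s <= i)%N.
Proof.
move=> ss si; rewrite -[X in count _ X](cat_take_drop i s) count_cat.
have -> : count (> nth x0 s i) (drop i s) = 0%N.
  apply/eqP; rewrite -leqn0 leqNgt -has_count; apply/hasPn => a.
  case/(nthP x0) => j; rewrite size_drop ltn_subRL => js <-.
  by rewrite nth_drop /= -leNgt sorted_ge_nth ?leq_addr.
by rewrite addn0 (leq_trans (count_size _ _)) // size_take si.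
Qed.

Lemma count_gt_sorted_ge s i c :
  sorted >=%O s -> (i < size s)%N -> c < nth x0 s i -> (i < count (> c) s)%N.
Proof.
move=> ss si ci; rewrite -[X in count _ X](cat_take_drop i.+1 s) count_cat.
have -> : count (> c) (take i.+1 s) = i.+1.
  apply/eqP; rewrite -[X in _ == X](@size_takel i.+1 _ s) // -all_count.
  apply/allP => a /(nthP x0) [j]; rewrite size_takel // => ji <-.
  by rewrite nth_take //= (lt_le_trans ci) ?sorted_ge_nth.
exact: leq_addr.
Qed.

End SortedNonincreasing.

Local Open Scope ring_scope.

Section AffineHull.
Variables (R : realFieldType) (d : nat).
Notation pt := 'rV[R]_d.
Implicit Types (S A : seq pt) (x y u : pt).

(* Affine hulls and affine independence become row spaces and row freeness
   of the homogenized points (1, x). *)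
Definition homog x : 'rV[R]_(1 + d) := row_mx (const_mx 1) x.

Definition homog_mx S : 'M[R]_(size S, 1 + d) := \matrix_(i < size S) homog S`_i.

Lemma row_homog_mx S (i : 'I_(size S)) : row i (homog_mx S) = homog S`_i.
Proof. by rewrite rowK. Qed.

Lemma homog_sub_mx S y : y \in S -> (homog y <= homog_mx S)%MS.
Proof.
move=> yS; have yi : (index y S < size S)%N by rewrite index_mem.
rewrite -(nth_index 0 yS) -[index y S]/(nat_of_ord (Ordinal yi)).
by rewrite -row_homog_mx row_sub.
Qed.

Lemma homog_mxS S S' : {subset S <= S'} -> (homog_mx S <= homog_mx S')%MS.
Proof.
move=> sub; apply/row_subP => i.
by rewrite row_homog_mx homog_sub_mx ?sub ?mem_nth.
Qed.

Lemma homog_sum n (l : 'I_n -> R) (F : 'I_n -> pt) :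
  \sum_j l j *: homog (F j) = row_mx (const_mx (\sum_j l j)) (\sum_j l j *: F j).
Proof.
apply/rowP => k; rewrite summxE; case: (splitP k) => j kj.
  have -> : k = lshift d j by exact: val_inj.
  rewrite row_mxEl mxE; apply: eq_bigr => i _.
  by rewrite [LHS]mxE /homog row_mxEl mxE mulr1.
have -> : k = rshift 1 j by exact: val_inj.
rewrite row_mxEr summxE; apply: eq_bigr => i _.
by rewrite [LHS]mxE [RHS]mxE /homog row_mxEr.
Qed.

Lemma in_aff_homog_sub_mx A S x :
  {subset A <= S} -> in_aff A x -> (homog x <= homog_mx S)%MS.
Proof.
move=> AS [l [l1 ->]]; apply: submx_trans (homog_mxS AS).
rewrite /homog -l1 -homog_sum; apply: summx_sub => i _.
by rewrite scalemx_sub // -row_homog_mx row_sub.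
Qed.

Lemma aff_indep_row_free S : aff_indep S -> row_free (homog_mx S).
Proof.
move=> indS; rewrite -kermx_eq0; apply/eqP/row_matrixP => r; rewrite row0.
set v := row r _; have : row r (kermx (homog_mx S) *m homog_mx S) = 0.
  by rewrite mulmx_ker row0.
rewrite row_mul -/v mulmx_sum_row.
under eq_bigr => j _ do rewrite row_homog_mx.
rewrite homog_sum -row_mx0 => /eq_row_mx[/rowP/(_ 0)].
rewrite !mxE => v1 vS; apply/rowP => j.
by move: (indS _ v1 vS j); rewrite !mxE.
Qed.

Lemma dotpBr u x y : dotp u (x - y) = dotp u x - dotp u y.
Proof. by rewrite /dotp -sumrB; apply: eq_bigr => k _; rewrite !mxE mulrBr. Qed.

Lemma count_aff_indep_le S A (P : pred pt) :
  aff_indep S -> (forall y, y \in S -> P y -> (homog y <= homog_mx A)%MS) ->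
  (count P S <= size A)%N.
Proof.
move=> indS PA; pose L := [seq y <- S | ~~ P y].
have SAL : (homog_mx S <= homog_mx A + homog_mx L)%MS.
  apply/row_subP => j; rewrite row_homog_mx.
  have yS : S`_j \in S by exact: mem_nth.
  case: (boolP (P S`_j)) => Py.
    by rewrite (submx_trans (PA _ yS Py)) ?addsmxSl.
  by rewrite (submx_trans _ (addsmxSr _ _)) // homog_sub_mx // mem_filter Py.
have := leq_trans (mxrankS SAL) (leq_trans (mxrank_adds_leqif _ _).1
  (leq_add (rank_leq_row _) (rank_leq_row _))).
rewrite (eqP (aff_indep_row_free indS)) -(count_predC P S) size_filter.
by rewrite leq_add2r.
Qed.

End AffineHull.

Section SortedValues.
Variables (R : realFieldType) (d : nat) (u : 'rV[R]_d).
Implicit Type B : seq 'rV[R]_d.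

Lemma size_vvec B : size (vvec u B) = size B.
Proof. by rewrite size_sort size_map. Qed.

Lemma sorted_vvec B : sorted >=%O (vvec u B).
Proof. by apply: sort_sorted => a b; exact: le_total. Qed.

Lemma count_vvec B (P : pred R) : count P (vvec u B) = count (P \o dotp u) B.
Proof. by rewrite (permP (permEl (perm_sort _ _))) count_map. Qed.

End SortedValues.

Theorem mainTheorem12 (R : realFieldType) (d : nat) (X : 'rV[R]_d -> Prop)
  (u : 'rV[R]_d) (B B' : seq 'rV[R]_d) :
  polytope X -> full_dim X ->
  affine_basis X B -> affine_basis X B' ->
  (forall x, x \in B -> is_vertex X x) ->
  (forall x, x \in B' -> is_vertex X x) ->
  optimal_spanning X u B ->
  forall i : 'I_d.+1, nth 0 (vvec u B') i <= nth 0 (vvec u B) i.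
Proof.
move=> _ _ [szB _ _] [szB' indB' _] _ vertB' [_ optB] i.
rewrite leNgt; apply/negP => vBi_lt.
set c := nth 0 (vvec u B) i; pose above y := c < dotp u y.
have aboveB : (count above B <= i)%N.
  by rewrite -count_vvec count_gt_nth_sorted_ge ?sorted_vvec ?size_vvec ?szB.
have aboveB' : (i < count above B')%N.
  by rewrite -count_vvec (count_gt_sorted_ge (x0 := 0))
    ?sorted_vvec ?size_vvec ?szB'.
have : (count above B' <= count above B)%N.
  rewrite -[count above B]size_filter.
  apply: count_aff_indep_le indB' _ => y yB' cy.
  apply: in_aff_homog_sub_mx (optB _ (vertB' _ yB')) => z.
  rewrite !mem_filter dotpBr subr_ge0 => /andP[yz ->].
  by rewrite andbT /above (lt_le_trans cy).
by rewrite leqNgt (leq_ltn_trans aboveB aboveB').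
Qed.
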